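(* Let $(l_i)$ be pairwise distinct labels indexed by a set containing $j_0$ and the finite set $J$, and let $\sigma,\tau_j\in\mathbb{T}$. Then (1) if $j_0\in J$, $\langle l_{j_0}:\sigma\rangle+\langle l_j:\tau_j\mid j\in J\rangle=\langle l_j:\tau_j\mid j\in J\rangle$; (2) if $j_0\notin J$, $\langle l_{j_0}:\sigma\rangle+\langle l_j:\tau_j\mid j\in J\rangle=\langle l_{j_0}:\sigma\rangle\cap\langle l_j:\tau_j\mid j\in J\rangle$.
   Context: $\mathbb{T}\ni\sigma ::= a\mid\omega\mid\sigma_1\to\sigma_2\mid\sigma_1\cap\sigma_2\mid\rho$ and record types $\mathbb{T}_R\ni\rho ::= \langle\rangle\mid\langle l:\sigma\rangle\mid\rho_1+\rho_2\mid\rho_1\cap\rho_2$. Subtyping $\le$ is the least preorder with: $\sigma\le\omega$; $\omega\le\omega\to\omega$; $\sigma\cap\tau\le\sigma$; $\sigma\cap\tau\le\tau$; $\sigma\le\tau_1,\sigma\le\tau_2\Rightarrow\sigma\le\tau_1\cap\tau_2$; $(\sigma\to\tau_1)\cap(\sigma\to\tau_2)\le\sigma\to\tau_1\cap\tau_2$; $\sigma_2\le\sigma_1,\tau_1\le\tau_2\Rightarrow\sigma_1\to\tau_1\le\sigma_2\to\tau_2$; $\langle l:\sigma\rangle\le\langle\rangle$; $\langle l:\sigma\rangle\cap\langle l:\tau\rangle\le\langle l:\sigma\cap\tau\rangle$; $\sigma\le\tau\Rightarrow\langle l:\sigma\rangle\le\langle l:\tau\rangle$; $\rho+\langle\rangle=\langle\rangle+\rho=\rho$;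 $(\rho_1+\rho_2)+\rho_3=\rho_1+(\rho_2+\rho_3)$; $(\rho_1\cap\rho_2)+\rho_3=(\rho_1+\rho_3)\cap(\rho_2+\rho_3)$; $\langle l:\sigma\rangle+(\langle l:\tau\rangle\cap\rho)=\langle l:\tau\rangle\cap\rho$; $\langle l:\sigma\rangle+(\langle l':\tau\rangle\cap\rho)=\langle l':\tau\rangle\cap(\langle l:\sigma\rangle+\rho)$ if $l\neq l'$; $\rho_1\le\rho_2\Rightarrow\rho_1+\rho\le\rho_2+\rho$; $\rho_1=\rho_2\Rightarrow\rho+\rho_1=\rho+\rho_2$. $=$ means $\le$ in both directions. $\langle l_i:\sigma_i\mid i\in I\rangle$ stands for $\bigcap_{i\in I}\langle l_i:\sigma_i\rangle$ if $I\neq\emptyset$ and $\langle\rangle$ if $I=\emptyset$. *)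

From mathcomp Require Import all_boot.
Set Implicit Arguments. Unset Strict Implicit. Unset Printing Implicit Defensive.

Definition tvar := nat.
Definition label := nat.

(* One syntax for T; record types T_R are the sub-grammar recognised by
   [is_rec] (intersection of records is the same constructor [TCap]). *)
Inductive ty : Type :=
| TVar   : tvar -> ty
| TOmega : ty
| TArr   : ty -> ty -> ty
| TCap   : ty -> ty -> ty
| TEmpty : ty
| TField : label -> ty -> ty
| TPlus  : ty -> ty -> ty.

Fixpoint is_rec (t : ty) : Prop :=
  match t with
  | TEmpty => True
  | TField _ _ => True
  | TPlus r1 r2 => is_rec r1 /\ is_rec r2
  | TCap r1 r2 => is_rec r1 /\ is_rec r2
  | _ => False
  end.

(* The subtyping relation: least preorder closed under the listed rules.
   An axiom "A = B" contributes both A <= B and B <= A. *)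
Inductive sub : ty -> ty -> Prop :=
| sub_refl s : sub s s
| sub_trans s t u : sub s t -> sub t u -> sub s u
| sub_omega s : sub s TOmega
| sub_omega_arr : sub TOmega (TArr TOmega TOmega)
| sub_capl s t : sub (TCap s t) s
| sub_capr s t : sub (TCap s t) t
| sub_glb s t1 t2 : sub s t1 -> sub s t2 -> sub s (TCap t1 t2)
| sub_arr_cap s t1 t2 :
    sub (TCap (TArr s t1) (TArr s t2)) (TArr s (TCap t1 t2))
| sub_arr s1 s2 t1 t2 : sub s2 s1 -> sub t1 t2 -> sub (TArr s1 t1) (TArr s2 t2)
| sub_field_empty l s : sub (TField l s) TEmpty
| sub_field_cap l s t : sub (TCap (TField l s) (TField l t)) (TField l (TCap s t))
| sub_field l s t : sub s t -> sub (TField l s) (TField l t)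
| sub_plus_empty_r1 r : is_rec r -> sub (TPlus r TEmpty) r
| sub_plus_empty_r2 r : is_rec r -> sub r (TPlus r TEmpty)
| sub_plus_empty_l1 r : is_rec r -> sub (TPlus TEmpty r) r
| sub_plus_empty_l2 r : is_rec r -> sub r (TPlus TEmpty r)
| sub_plus_assoc1 r1 r2 r3 : is_rec r1 -> is_rec r2 -> is_rec r3 ->
    sub (TPlus (TPlus r1 r2) r3) (TPlus r1 (TPlus r2 r3))
| sub_plus_assoc2 r1 r2 r3 : is_rec r1 -> is_rec r2 -> is_rec r3 ->
    sub (TPlus r1 (TPlus r2 r3)) (TPlus (TPlus r1 r2) r3)
| sub_plus_capdist1 r1 r2 r3 : is_rec r1 -> is_rec r2 -> is_rec r3 ->
    sub (TPlus (TCap r1 r2) r3) (TCap (TPlus r1 r3) (TPlus r2 r3))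
| sub_plus_capdist2 r1 r2 r3 : is_rec r1 -> is_rec r2 -> is_rec r3 ->
    sub (TCap (TPlus r1 r3) (TPlus r2 r3)) (TPlus (TCap r1 r2) r3)
| sub_plus_same1 l s t r : is_rec r ->
    sub (TPlus (TField l s) (TCap (TField l t) r)) (TCap (TField l t) r)
| sub_plus_same2 l s t r : is_rec r ->
    sub (TCap (TField l t) r) (TPlus (TField l s) (TCap (TField l t) r))
| sub_plus_diff1 l l' s t r : l <> l' -> is_rec r ->
    sub (TPlus (TField l s) (TCap (TField l' t) r))
        (TCap (TField l' t) (TPlus (TField l s) r))
| sub_plus_diff2 l l' s t r : l <> l' -> is_rec r ->
    sub (TCap (TField l' t) (TPlus (TField l s) r))
        (TPlus (TField l s) (TCap (TField l' t) r))
| sub_plus_mono r1 r2 r : is_rec r1 -> is_rec r2 -> is_rec r ->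
    sub r1 r2 -> sub (TPlus r1 r) (TPlus r2 r)
| sub_plus_cong1 r r1 r2 : is_rec r -> is_rec r1 -> is_rec r2 ->
    sub r1 r2 -> sub r2 r1 -> sub (TPlus r r1) (TPlus r r2)
| sub_plus_cong2 r r1 r2 : is_rec r -> is_rec r1 -> is_rec r2 ->
    sub r1 r2 -> sub r2 r1 -> sub (TPlus r r2) (TPlus r r1).

Definition tyeq (s t : ty) : Prop := sub s t /\ sub t s.

Fixpoint recs (I : Type) (l : I -> label) (s : I -> ty) (J : seq I) : ty :=
  match J with
  | [::] => TEmpty
  | [:: j] => TField (l j) (s j)
  | j :: J' => TCap (TField (l j) (s j)) (recs l s J')
  end.

(* Proof: a record <l_j : tau_j | j in J> is equal to the right-nested
   intersection <l_j1 : tau_j1> /\ (... /\ (<l_jn : tau_jn> /\ <>)), on which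
   the two "+" axioms for fields act directly.  Walking down the intersection,
   <l : sigma> + - commutes past every field with a different label; it is
   absorbed by the first field with label l, and if there is none it reaches
   <> and yields <l : sigma> /\ <> = <l : sigma>.  Only the labels matter. *)
From mathcomp Require Import all_boot.
Set Implicit Arguments. Unset Strict Implicit.

Lemma tyeq_refl s : tyeq s s.
Proof. by split; apply: sub_refl. Qed.

Lemma tyeq_sym s t : tyeq s t -> tyeq t s.
Proof. by case. Qed.

Lemma tyeq_trans s t u : tyeq s t -> tyeq t u -> tyeq s u.
Proof. by move=> [st ts] [tu ut]; split; apply: sub_trans; eassumption. Qed.

Lemma tyeq_capr s t1 t2 : tyeq t1 t2 -> tyeq (TCap s t1) (TCap s t2).
Proof.
by case=> t12 t21; split; apply: sub_glb; do ?apply: sub_capl;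
  apply: sub_trans (sub_capr _ _) _.
Qed.

Lemma tyeq_capCA s t u : tyeq (TCap s (TCap t u)) (TCap t (TCap s u)).
Proof.
have capCA a b c : sub (TCap a (TCap b c)) (TCap b (TCap a c)).
  apply: sub_glb; last apply: sub_glb.
  - exact: sub_trans (sub_capr _ _) (sub_capl _ _).
  - exact: sub_capl.
  - exact: sub_trans (sub_capr _ _) (sub_capr _ _).
by split; apply: capCA.
Qed.

Lemma tyeq_cap_empty_r l s : tyeq (TCap (TField l s) TEmpty) (TField l s).
Proof. by split; [apply: sub_capl | apply: sub_glb; constructor]. Qed.

Lemma tyeq_plusr r r1 r2 : is_rec r -> is_rec r1 -> is_rec r2 ->
  tyeq r1 r2 -> tyeq (TPlus r r1) (TPlus r r2).
Proof.
by move=> r_rec r1_rec r2_rec [r12 r21]; split;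
  [apply: sub_plus_cong1 | apply: sub_plus_cong2].
Qed.

Lemma tyeq_plus_empty_r r : is_rec r -> tyeq (TPlus r TEmpty) r.
Proof. by split; [apply: sub_plus_empty_r1 | apply: sub_plus_empty_r2]. Qed.

Lemma tyeq_plus_field_same l s t r : is_rec r ->
  tyeq (TPlus (TField l s) (TCap (TField l t) r)) (TCap (TField l t) r).
Proof. by split; [apply: sub_plus_same1 | apply: sub_plus_same2]. Qed.

Lemma tyeq_plus_field_diff l l' s t r : l <> l' -> is_rec r ->
  tyeq (TPlus (TField l s) (TCap (TField l' t) r))
       (TCap (TField l' t) (TPlus (TField l s) r)).
Proof. by split; [apply: sub_plus_diff1 | apply: sub_plus_diff2]. Qed.

Section FieldCaps.

Variables (I : Type) (l : I -> label) (tau : I -> ty).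

Fixpoint field_caps (J : seq I) : ty :=
  if J is j :: J' then TCap (TField (l j) (tau j)) (field_caps J') else TEmpty.

Lemma is_rec_field_caps J : is_rec (field_caps J).
Proof. by elim: J => //= j J ->. Qed.

Lemma is_rec_recs J : is_rec (recs l tau J).
Proof. by elim: J => //= j [|k J]. Qed.

Lemma recs_field_caps J : tyeq (recs l tau J) (field_caps J).
Proof.
elim: J => [|j [|k J] IH]; first exact: tyeq_refl.
  exact/tyeq_sym/tyeq_cap_empty_r.
exact: tyeq_capr.
Qed.

Lemma tyeq_plus_recs_field_caps r J : is_rec r ->
  tyeq (TPlus r (recs l tau J)) (TPlus r (field_caps J)).
Proof.
move=> r_rec; apply: tyeq_plusr => //; first exact: is_rec_recs.
  exact: is_rec_field_caps.
exact: recs_field_caps.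
Qed.

Lemma plus_field_caps_mem k sigma J : k \in map l J ->
  tyeq (TPlus (TField k sigma) (field_caps J)) (field_caps J).
Proof.
elim: J => //= j J IH; rewrite inE.
have [-> _ | k_neq_lj k_in] := eqVneq k (l j).
  exact/tyeq_plus_field_same/is_rec_field_caps.
apply: tyeq_trans (tyeq_plus_field_diff sigma (tau j) _ (is_rec_field_caps J)) _.
  exact/eqP.
exact/tyeq_capr/IH.
Qed.

Lemma plus_field_caps_notin k sigma J : k \notin map l J ->
  tyeq (TPlus (TField k sigma) (field_caps J))
       (TCap (TField k sigma) (field_caps J)).
Proof.
elim: J => [_ | j J IH] /=.
  apply: tyeq_trans (tyeq_plus_empty_r _) _ => //.
  exact/tyeq_sym/tyeq_cap_empty_r.
rewrite inE negb_or => /andP[k_neq_lj k_notin].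
apply: tyeq_trans (tyeq_plus_field_diff sigma (tau j) _ (is_rec_field_caps J)) _.
  exact/eqP.
apply: tyeq_trans (tyeq_capr _ (IH k_notin)) _.
exact: tyeq_capCA.
Qed.

End FieldCaps.

Theorem lemma3p6 (I : eqType) (l : I -> label) (j0 : I) (J : seq I)
    (sigma : ty) (tau : I -> ty) :
  injective l -> uniq J ->
  (j0 \in J ->
     tyeq (TPlus (TField (l j0) sigma) (recs l tau J)) (recs l tau J)) /\
  (j0 \notin J ->
     tyeq (TPlus (TField (l j0) sigma) (recs l tau J))
          (TCap (TField (l j0) sigma) (recs l tau J))).
Proof.
move=> l_inj _; rewrite -(mem_map l_inj).
set F := TField (l j0) sigma.
have plus_recs : tyeq (TPlus F (recs l tau J)) (TPlus F (field_caps l tau J)).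
  exact: tyeq_plus_recs_field_caps.
have recs_caps := recs_field_caps l tau J.
split=> [j0_in | j0_notin]; apply: tyeq_trans plus_recs _.
  exact: tyeq_trans (plus_field_caps_mem tau sigma j0_in) (tyeq_sym recs_caps).
apply: tyeq_trans (plus_field_caps_notin tau sigma j0_notin) _.
exact/tyeq_capr/tyeq_sym.
Qed.
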